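(* Let $n$ and $0<n_1<\cdots<n_d<n$ be integers with $m_1=n_1$, $m_k=n_k-n_{k-1}$ ($2\le k\le d$), $m_{d+1}=n-n_d$, and regard $\mathrm{Flag}(n_1,\dots,n_d;n)=\{(VJ_1V^{\mathsf T},\dots,VJ_dV^{\mathsf T}):V\in\mathrm{O}(n)\}$ as a submanifold of $(\mathbb{R}^{n\times n})^d$ with the Euclidean (Frobenius) inner product $\langle (X_k),(Y_k)\rangle=\sum_k\operatorname{tr}(X_k^{\mathsf T}Y_k)$. Let $V(t)$ be a differentiable curve in $\mathrm{O}(n)$, $\Lambda(t)=V(t)^{\mathsf T}\dot V(t)\in\mathfrak{so}(n)$, and assume $\Lambda(p,p)(t)\equiv 0$ for $p=1,\dots,d+1$. Let $c(t)=V(t)(J_1,\dots,J_d)V(t)^{\mathsf T}$ and \[ T_2(t)=V(t)\big(\Lambda(t)^2J_1+J_1\Lambda(t)^2,\dots,\Lambda(t)^2J_d+J_d\Lambda(t)^2\big)V(t)^{\mathsf T}. \] Then the orthogonal projection of $T_2(t)$ onto $\mathbb{T}_{c(t)}\mathrm{Flag}(n_1,\dots,n_d;n)$ is zero.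
   Context: $J_k=\operatorname{diag}(-I_{m_1},\dots,-I_{m_{k-1}},I_{m_k},-I_{m_{k+1}},\dots,-I_{m_{d+1}})$. $V(X_1,\dots,X_d)V^{\mathsf T}$ denotes $(VX_1V^{\mathsf T},\dots,VX_dV^{\mathsf T})$. For an $n\times n$ matrix $M$, $M(p,q)$ denotes its $(p,q)$ block in the partition $n=m_1+\cdots+m_{d+1}$. *)

From HB Require Import structures.
From mathcomp Require Import all_boot all_order all_algebra.
From mathcomp Require Import all_classical all_reals all_analysis.
Set Implicit Arguments. Unset Strict Implicit. Unset Printing Implicit Defensive.
Import Order.TTheory GRing.Theory Num.Theory.
Import numFieldNormedType.Exports.
Local Open Scope ring_scope.
Local Open Scope classical_set_scope.

Section FlagDefs.
Variable R : realType.
Variables (n d : nat).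

(* ns : 'I_d -> nat encodes n_1 < ... < n_d (ns k = n_{k+1}). *)

(* 0-indexed block of row index i in the partition n = m_1 + ... + m_{d+1}:
   block p (1-indexed) consists of the indices n_{p-1} <= i < n_p (n_0 = 0,
   n_{d+1} = n); blk i = #{k | n_k <= i} = p - 1. *)
Definition blk (ns : 'I_d -> nat) (i : 'I_n) : nat := #|[set k : 'I_d | (ns k <= i)%N]|.

(* J_{k+1} = diag(-I, .., -I, I_{m_{k+1}}, -I, .., -I), for k : 'I_d. *)
Definition Jmx (ns : 'I_d -> nat) (k : 'I_d) : 'M[R]_n :=
  \matrix_(i, j) (if i == j then (if blk ns i == k then 1 else -1) else 0).

Definition orthmx (W : 'M[R]_n) : Prop := W^T *m W = 1%:M.

Definition Flag (ns : 'I_d -> nat) : set ('I_d -> 'M[R]_n) :=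
  [set X | exists W, orthmx W /\ forall k, X k = W *m Jmx ns k *m W^T].

Definition frob (X Y : 'I_d -> 'M[R]_n) : R := \sum_k \tr ((X k)^T *m Y k).

Definition mx_derivable m p (V : R -> 'M[R]_(m, p)) (t : R) : Prop :=
  forall i j, derivable (fun s => V s i j) t 1.
Definition mx_deriv m p (V : R -> 'M[R]_(m, p)) (t : R) : 'M[R]_(m, p) :=
  \matrix_(i, j) (fun s => V s i j)^`() t.

Definition tangent_space (M : set ('I_d -> 'M[R]_n)) (x : 'I_d -> 'M[R]_n)
  : set ('I_d -> 'M[R]_n) :=
  [set Y | exists g : R -> ('I_d -> 'M[R]_n),
     (\forall s \near (0:R), M (g s)) /\ g 0 = x /\
     (forall k, mx_derivable (fun s => g s k) 0) /\
     (forall k, mx_deriv (fun s => g s k) 0 = Y k)].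

Definition is_orth_proj (T : set ('I_d -> 'M[R]_n)) (X P : 'I_d -> 'M[R]_n) : Prop :=
  T P /\ forall Y, T Y -> frob (fun k => X k - P k) Y = 0.

End FlagDefs.

(** The points of the flag manifold are tuples of symmetric involutions, so
    differentiating X_k^2 = 1 along a curve shows that every tangent vector Y
    at X satisfies Y_k X_k + X_k Y_k = 0.  Since V^T V = 1, the k-th component
    of T_2 is the anticommutator S c_k + c_k S with S = V Λ² V^T, and
    tr((S c_k + c_k S)^T Y_k) = tr(S^T (Y_k c_k + c_k Y_k)) = 0. *)
From HB Require Import structures.
From mathcomp Require Import all_boot all_order all_algebra.
From mathcomp Require Import all_classical all_reals all_analysis.
Import Order.TTheory GRing.Theory Num.Theory.
Import numFieldNormedType.Exports.
Local Open Scope ring_scope.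
Local Open Scope classical_set_scope.

Section ConjugationTrace.
Context {R : comPzRingType} {n : nat}.
Implicit Types A B S W Y c : 'M[R]_n.

Lemma orth_conj_mulmx W A B : W^T *m W = 1%:M ->
  W *m (A *m B) *m W^T = (W *m A *m W^T) *m (W *m B *m W^T).
Proof.
by move=> WtW; rewrite !mulmxA -[W *m A *m W^T *m W]mulmxA WtW mulmx1.
Qed.

Lemma mxtrace_anticomm c S Y : c^T = c -> Y *m c + c *m Y = 0 ->
  \tr ((S *m c + c *m S)^T *m Y) = 0.
Proof.
move=> c_sym Yc_anti.
rewrite linearD /= !trmx_mul c_sym mulmxDl mxtraceD -mulmxA mxtrace_mulC.
by rewrite -mxtraceD -!mulmxA -mulmxDr Yc_anti mulmx0 linear0.
Qed.

End ConjugationTrace.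

Section MatrixDerivative.
Variable R : realType.

Lemma mx_deriv_mul m p q (f : R -> 'M[R]_(m, p)) (g : R -> 'M[R]_(p, q)) t :
  mx_derivable f t -> mx_derivable g t ->
  mx_deriv (fun s => f s *m g s) t = mx_deriv f t *m g t + f t *m mx_deriv g t.
Proof.
move=> fd gd; apply/matrixP => i j; rewrite !mxE -big_split /=.
pose h l := ((fun s => f s i l) : R -> R^o) * (fun s => g s l j).
have -> : (fun s => (f s *m g s) i j) = \sum_l h l.
  by apply/funext => s; rewrite mxE fct_sumE.
rewrite derive1E derive_sum => [|l]; last exact: derivableM.
apply: eq_bigr => l _; rewrite deriveM // !mxE !derive1E.
by rewrite addrC; congr (_ + _); exact: mulrC.
Qed.

Lemma mx_deriv_near_cst m p (f : R -> 'M[R]_(m, p)) t A :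
  (\forall s \near t, f s = A) -> mx_deriv f t = 0.
Proof.
move=> fA; apply/matrixP => i j; rewrite !mxE derive1E.
have fAij : \forall s \near t, ((fun s => f s i j) : R -> R^o) s = cst (A i j) s.
  by apply: filterS fA => s ->.
by rewrite (near_eq_derive _ fAij) derive_cst.
Qed.

Lemma mx_deriv_involution n (f : R -> 'M[R]_n) t :
  mx_derivable f t -> (\forall s \near t, f s *m f s = 1%:M) ->
  mx_deriv f t *m f t + f t *m mx_deriv f t = 0.
Proof. by move=> fd fsq; rewrite -mx_deriv_mul //; exact: mx_deriv_near_cst fsq. Qed.

End MatrixDerivative.

Section FlagTangent.
Variable R : realType.
Variables n d : nat.
Variable ns : 'I_d -> nat.

Lemma trmx_Jmx k : (Jmx R n ns k)^T = Jmx R n ns k.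
Proof. by apply/matrixP => i j; rewrite !mxE eq_sym; case: eqP => // ->. Qed.

Lemma Jmx_sq k : Jmx R n ns k *m Jmx R n ns k = 1%:M.
Proof.
apply/matrixP => i j; rewrite !mxE (bigD1 i) //= big1 ?addr0 => [|l /negbTE li].
  by rewrite !mxE eqxx; case: eqP => _; case: ifP; rewrite ?mulr0 ?mulrNN ?mulr1.
by rewrite !mxE eq_sym li mul0r.
Qed.

Lemma Flag_sq X k : @Flag R n d ns X -> X k *m X k = 1%:M.
Proof.
case=> W [WtW ->]; have WWt : W *m W^T = 1%:M by exact: mulmx1C.
by rewrite -orth_conj_mulmx // Jmx_sq mulmx1.
Qed.

Lemma tangent_space0 (M : set ('I_d -> 'M[R]_n)) x :
  M x -> tangent_space M x (fun _ => 0).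
Proof.
move=> Mx; exists (fun _ => x); split; last split; [|by []|split].
- exact: filterE.
- by move=> k i j; exact: derivable_cst.
- by move=> k; apply/matrixP => i j; rewrite !mxE derive1_cst.
Qed.

Lemma tangent_Flag_anticomm x Y k :
  tangent_space (@Flag R n d ns) x Y -> Y k *m x k + x k *m Y k = 0.
Proof.
case=> g [gFlag [<- [gd <-]]]; apply: mx_deriv_involution => //.
by apply: filterS gFlag => s /Flag_sq; apply.
Qed.

End FlagTangent.

Theorem lemma3p7 (R : realType) (n d : nat) (ns : 'I_d -> nat)
  (hd : (0 < d)%N)
  (hpos : forall k : 'I_d, (0 < ns k)%N)
  (hinc : forall k l : 'I_d, (k < l)%N -> (ns k < ns l)%N)
  (hlt : forall k : 'I_d, (ns k < n)%N)
  (V : R -> 'M[R]_n)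
  (hVO : forall t, orthmx (V t))
  (hVd : forall t, mx_derivable V t)
  (hLam : forall t (i j : 'I_n), blk ns i = blk ns j ->
            ((V t)^T *m mx_deriv V t) i j = 0)
  (t : R) :
  let Lam := (V t)^T *m mx_deriv V t in
  let c := fun k : 'I_d => V t *m @Jmx R n d ns k *m (V t)^T in
  let T2 := fun k : 'I_d =>
    V t *m (Lam *m Lam *m @Jmx R n d ns k + @Jmx R n d ns k *m (Lam *m Lam)) *m (V t)^T in
  is_orth_proj (tangent_space (@Flag R n d ns) c) T2 (fun _ => 0).
Proof.
move=> Lam c T2; split; first by apply: tangent_space0; exists (V t).
move=> Y /tangent_Flag_anticomm Yc_anti; rewrite /frob big1 // => k _.
have c_sym : (c k)^T = c k by rewrite !trmx_mul trmxK trmx_Jmx mulmxA.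
set S := Lam *m Lam; set J := Jmx R n ns k.
rewrite subr0 /T2 mulmxDr mulmxDl.
rewrite (orth_conj_mulmx _ S J (hVO t)) (orth_conj_mulmx _ J S (hVO t)).
exact: mxtrace_anticomm c_sym (Yc_anti k).
Qed.
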